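(* Let $G$ be an msp-digraph. Then $\chi'_o(G)\le 7$.
   Context: An oriented $r$-arc-coloring of a digraph $G=(V,E)$ is a map $c:E\to\{1,\dots,r\}$ such that (i) $c((u,v))\ne c((v,w))$ for every two arcs $(u,v),(v,w)\in E$, and (ii) $c((u,v))\ne c((y,z))$ for all arcs $(u,v),(v,w),(x,y),(y,z)\in E$ with $c((v,w))=c((x,y))$. The oriented chromatic index $\chi'_o(G)$ is the smallest $r$ for which such a coloring exists. Minimal vertex series-parallel digraphs (msp-digraphs) are defined recursively: (i) a single vertex with no arcs is an msp-digraph; (ii) if $G_1=(V_1,E_1)$ and $G_2=(V_2,E_2)$ are vertex-disjoint msp-digraphs, $O_1$ is the set of vertices of outdegree $0$ in $G_1$ and $I_2$ the set of vertices of indegree $0$ in $G_2$, then the parallel composition $G_1\cup G_2=(V_1\cup V_2,E_1\cup E_2)$ and the series composition $G_1\times G_2=(V_1\cup V_2,E_1\cup E_2\cup(O_1\times I_2))$ are msp-digraphs. *)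

From mathcomp Require Import all_boot.
Set Implicit Arguments. Unset Strict Implicit. Unset Printing Implicit Defensive.

Definition par_rel (V1 V2 : finType) (E1 : rel V1) (E2 : rel V2) : rel (V1 + V2) :=
  fun a b => match a, b with
             | inl x, inl y => E1 x y
             | inr x, inr y => E2 x y
             | _, _ => false
             end.

Definition ser_rel (V1 V2 : finType) (E1 : rel V1) (E2 : rel V2) : rel (V1 + V2) :=
  fun a b => match a, b with
             | inl x, inl y => E1 x y
             | inr x, inr y => E2 x y
             | inl x, inr y => [forall z, ~~ E1 x z] && [forall z, ~~ E2 z y]
             | inr _, inl _ => false
             end.

(* Minimal vertex series-parallel digraphs (up to isomorphism). *)
Inductive msp : forall (V : finType), rel V -> Prop :=
  | msp_single : msp (fun _ _ : unit => false)
  | msp_par (V1 V2 : finType) (E1 : rel V1) (E2 : rel V2) :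
      msp E1 -> msp E2 -> msp (par_rel E1 E2)
  | msp_ser (V1 V2 : finType) (E1 : rel V1) (E2 : rel V2) :
      msp E1 -> msp E2 -> msp (ser_rel E1 E2)
  | msp_iso (V V' : finType) (E : rel V) (E' : rel V') (f : V -> V') :
      msp E -> bijective f -> (forall x y, E' (f x) (f y) = E x y) -> msp E'.

(* An oriented r-arc-coloring: colors 'I_r (i.e. {1,...,r} shifted to {0,...,r-1});
   c u v is the color of the arc (u,v) (values on non-arcs are irrelevant). *)
Definition oriented_arc_coloring (V : finType) (E : rel V) (r : nat)
    (c : V -> V -> 'I_r) : Prop :=
  (forall u v w, E u v -> E v w -> c u v <> c v w) /\
  (forall u v w x y z, E u v -> E v w -> E x y -> E y z ->
      c v w = c x y -> c u v <> c y z).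

Definition has_oriented_arc_coloring (V : finType) (E : rel V) (r : nat) : Prop :=
  exists c : V -> V -> 'I_r, oriented_arc_coloring E c.

From mathcomp Require Import all_boot.
From mathcomp Require Import ssralg zmodp.
Set Implicit Arguments. Unset Strict Implicit. Unset Printing Implicit Defensive.
Import GRing.Theory.

(* Colours live in Z/7 and are compared through the Paley tournament T7,
   where a -> b iff b - a is a non-zero square {1,2,4}.  A colouring of the
   arcs such that consecutive arcs (u,v),(v,w) always get a T7-arc
   c(u,v) -> c(v,w) is an oriented colouring, because T7 is an oriented graph.

   Such colourings are built along the msp construction with the invariant
   "arcs entering a sink are coloured in {0,1,5} and arcs leaving a source
   in {1,2,4}".  Disjoint unions and isomorphic copies keep it.  For a series
   composition, recolour G1 by x |-> 4x and G2 by x |-> 4x+1 (automorphisms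
   of T7) and give every new arc the colour 1: then {0,4,6} -> 1 -> {2,3,5}
   in T7 and the boundary profile is restored. *)

Local Open Scope ring_scope.

Definition QR : seq 'Z_7 := [:: 1; 2; 4].

Definition paley (a b : 'Z_7) : bool := b - a \in QR.

(* No square is the opposite of a square (-1 is not a square mod 7). *)
Lemma QR_oppr (x : 'Z_7) : x \in QR -> - x \notin QR.
Proof. by rewrite !inE => /or3P[]/eqP->. Qed.

Lemma QR_mull (a x : 'Z_7) : a \in QR -> (a * x \in QR) = (x \in QR).
Proof. by case: x => -[|[|[|[|[|[|[|]]]]]]] // ?; rewrite !inE => /or3P[]/eqP->. Qed.

Lemma paley_asym (a b : 'Z_7) : paley a b -> ~~ paley b a.
Proof. by move=> /QR_oppr; rewrite opprB. Qed.

Lemma paley_shift (k a b : 'Z_7) : paley (a + k) (b + k) = paley a b.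
Proof. by rewrite /paley [a + k]addrC addrKA. Qed.

Lemma paley_scale (s a b : 'Z_7) : s \in QR -> paley (s * a) (s * b) = paley a b.
Proof. by move=> sQR; rewrite /paley -mulrBr QR_mull. Qed.

(* A homomorphism of the line digraph into an oriented graph on the colours
   is an oriented arc-colouring: (i) loops are impossible and (ii) a 2-cycle
   c(u,v) -> c(v,w) = c(x,y) -> c(y,z) = c(u,v) is impossible. *)
Lemma line_hom_oriented (V : finType) (E : rel V) (r : nat)
    (T : rel 'I_r) (c : V -> V -> 'I_r) :
  (forall a b, T a b -> ~~ T b a) ->
  (forall u v w, E u v -> E v w -> T (c u v) (c v w)) ->
  oriented_arc_coloring E c.
Proof.
move=> Tasym hom; split.
- move=> u v w Euv Evw same.
  by have := hom _ _ _ Euv Evw; rewrite same => /[dup] /Tasym /negP.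
- move=> u v w x y z Euv Evw Exy Eyz same_vw_xy same_uv_yz.
  have := hom _ _ _ Exy Eyz; rewrite -same_vw_xy -same_uv_yz.
  by move/Tasym/negP; apply; apply: hom.
Qed.

Definition is_source (V : finType) (E : rel V) (v : V) := [forall z, ~~ E z v].
Definition is_sink (V : finType) (E : rel V) (v : V) := [forall z, ~~ E v z].

Lemma source_reflect (W V : finType) (E : rel W) (R : rel V) (f : W -> V) :
  (forall x y, R (f x) (f y) = E x y) ->
  forall x, is_source R (f x) -> is_source E x.
Proof. by move=> fE x /forallP src; apply/forallP => z; rewrite -fE. Qed.

Lemma sink_reflect (W V : finType) (E : rel W) (R : rel V) (f : W -> V) :
  (forall x y, R (f x) (f y) = E x y) ->
  forall x, is_sink R (f x) -> is_sink E x.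
Proof. by move=> fE x /forallP snk; apply/forallP => z; rewrite -fE. Qed.

Lemma msp_source_sink (V : finType) (E : rel V) :
  msp E -> (exists s, is_source E s) /\ (exists t, is_sink E t).
Proof.
elim=> {V E}.
- by split; exists tt; apply/forallP.
- move=> V1 V2 E1 E2 _ [[s /forallP src] [t /forallP snk]] _ _.
  by split; [exists (inl s) | exists (inl t)]; apply/forallP => -[].
- move=> V1 V2 E1 E2 _ [[s /forallP src] _] _ [_ [t /forallP snk]].
  by split; [exists (inl s) | exists (inr t)]; apply/forallP => -[].
- move=> V V' E E' f _ [[s /forallP src] [t /forallP snk]] [g _ gK] fE.
  split; [exists (f s) | exists (f t)]; apply/forallP => z;
    by rewrite -(gK z) fE.
Qed.

Definition sink_colors : seq 'Z_7 := [:: 0; 1; 5].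

Definition paley_coloring (V : finType) (E : rel V) (c : V -> V -> 'Z_7) :=
  [/\ forall u v w, E u v -> E v w -> paley (c u v) (c v w),
      forall u v, E u v -> is_sink E v -> c u v \in sink_colors &
      forall u v, E u v -> is_source E u -> c u v \in QR].

Lemma paley_coloring_par (V1 V2 : finType) (E1 : rel V1) (E2 : rel V2) c1 c2 :
  paley_coloring E1 c1 -> paley_coloring E2 c2 ->
  paley_coloring (par_rel E1 E2)
    (fun a b => match a, b with
                | inl x, inl y => c1 x y
                | inr x, inr y => c2 x y
                | _, _ => 0 end).
Proof.
move=> [hom1 snk1 src1] [hom2 snk2 src2]; split.
- by case=> u [] v [] w //=; [apply: hom1 | apply: hom2].
- case=> u [] v //= e snk; [apply: snk1 | apply: snk2] => //;
    by apply: sink_reflect snk.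
- case=> u [] v //= e src; [apply: src1 | apply: src2] => //;
    by apply: source_reflect src.
Qed.

Lemma ser_not_sink_inl (V1 V2 : finType) (E1 : rel V1) (E2 : rel V2) (s : V2) x :
  is_source E2 s -> ~ is_sink (ser_rel E1 E2) (inl x).
Proof.
move=> src snk; move/forallP/(_ (inr s))/negP: (snk); apply => /=.
by apply/andP; split; [apply: sink_reflect snk | ].
Qed.

Lemma ser_not_source_inr (V1 V2 : finType) (E1 : rel V1) (E2 : rel V2) (t : V1) y :
  is_sink E1 t -> ~ is_source (ser_rel E1 E2) (inr y).
Proof.
move=> snk src; move/forallP/(_ (inl t))/negP: (src); apply => /=.
by apply/andP; split; [ | apply: source_reflect src].
Qed.

(* The colour 1 of the new arcs fits both boundary profiles and sits
   between the rescaled profiles: 4*{0,1,5} -> 1 -> 4*{1,2,4} + 1 in T7. *)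
Lemma sink_colors_to_1 (x : 'Z_7) : x \in sink_colors -> paley (4 * x) 1.
Proof. by rewrite !inE => /or3P[]/eqP->. Qed.

Lemma one_to_QR (x : 'Z_7) : x \in QR -> paley 1 (4 * x + 1).
Proof. by rewrite !inE => /or3P[]/eqP->. Qed.

Lemma sink_colors_affine (x : 'Z_7) : x \in sink_colors -> 4 * x + 1 \in sink_colors.
Proof. by rewrite !inE => /or3P[]/eqP->. Qed.

Lemma paley_coloring_ser (V1 V2 : finType) (E1 : rel V1) (E2 : rel V2) c1 c2 s2 t1 :
  is_source E2 s2 -> is_sink E1 t1 ->
  paley_coloring E1 c1 -> paley_coloring E2 c2 ->
  paley_coloring (ser_rel E1 E2)
    (fun a b => match a, b with
                | inl x, inl y => 4 * c1 x y
                | inr x, inr y => 4 * c2 x y + 1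
                | inl _, inr _ => 1
                | inr _, inl _ => 0 end).
Proof.
move=> src2 snk1 [hom1 snkc1 srcc1] [hom2 snkc2 srcc2]; split.
- case=> u [] v [] w //=.
  + by move=> e1 e2; rewrite paley_scale //; apply: hom1.
  + by move=> e /andP[snk _]; apply/sink_colors_to_1/snkc1.
  + by move=> /andP[_ src] e; apply/one_to_QR/srcc2.
  + by move=> e1 e2; rewrite paley_shift paley_scale //; apply: hom2.
- case=> u [] v //= e snk.
  + by case: (ser_not_sink_inl src2 snk).
  + apply/sink_colors_affine/snkc2 => //; exact: sink_reflect snk.
- case=> u [] v //= e src.
  + by rewrite QR_mull //; apply: srcc1 => //; apply: source_reflect src.
  + by case: (ser_not_source_inr snk1 src).
Qed.

Lemma paley_coloring_iso (V V' : finType) (E : rel V) (E' : rel V') (f : V -> V')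
    (g : V' -> V) c :
  cancel g f -> (forall x y, E' (f x) (f y) = E x y) ->
  paley_coloring E c -> paley_coloring E' (fun a b => c (g a) (g b)).
Proof.
move=> gK fE [hom snkc srcc].
have E'E a b : E' a b = E (g a) (g b) by rewrite -fE !gK.
split=> [u v w | u v | u v]; rewrite !E'E; first exact: hom.
- move=> e snk; apply: snkc => //; apply: sink_reflect fE _ _; by rewrite gK.
- move=> e src; apply: srcc => //; apply: source_reflect fE _ _; by rewrite gK.
Qed.

Lemma msp_paley_coloring (V : finType) (E : rel V) :
  msp E -> exists c, paley_coloring E c.
Proof.
elim=> {V E}.
- by exists (fun _ _ => 0).
- move=> V1 V2 E1 E2 _ [c1 h1] _ [c2 h2].
  by eexists; apply: paley_coloring_par h1 h2.
- move=> V1 V2 E1 E2 m1 [c1 h1] m2 [c2 h2].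
  have [_ [t1 snk1]] := msp_source_sink m1.
  have [[s2 src2] _] := msp_source_sink m2.
  by eexists; apply: paley_coloring_ser src2 snk1 h1 h2.
- move=> V V' E E' f _ [c h] [g _ gK] fE.
  by eexists; apply: paley_coloring_iso gK fE h.
Qed.

Local Close Scope ring_scope.

Theorem mainTheorem8 (V : finType) (E : rel V) :
  msp E -> exists r, r <= 7 /\ has_oriented_arc_coloring E r.
Proof.
move=> /msp_paley_coloring [c [hom _ _]].
exists 7; split=> //; exists c.
exact: line_hom_oriented (@paley_asym) hom.
Qed.
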